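(* Let $\varepsilon\in\{1,-1\}$ and let $w$ be a positive integer. If $T'_n(\varepsilon)\equiv 1 \pmod{p^w}$, then for every integer $m\ge 2$, $$\frac{T^{(m)}_n(\varepsilon)\, p^m}{m!}\equiv 0 \pmod{p^{w+2}}$$ (here $T^{(m)}_n(\varepsilon)/m!$ is an integer).
   Context: $p$ is a prime with $p>3$ and $n>1$ is an integer with $\gcd(n,p)=\gcd(n,p^2-1)=1$. $T_n(x)\in\mathbb{Z}[x]$ is the Chebyshev polynomial of the first kind: $T_0=1$, $T_1=x$, $T_d=2xT_{d-1}-T_{d-2}$. $T^{(m)}_n$ is its $m$-th derivative and $T'_n=T^{(1)}_n$. *)

From HB Require Import structures.
From mathcomp Require Import all_boot all_order all_algebra.
Set Implicit Arguments. Unset Strict Implicit. Unset Printing Implicit Defensive.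
Import GRing.Theory.
Local Open Scope ring_scope.

Fixpoint chebT (d : nat) : {poly int} :=
  match d with
  | 0 => 1
  | 1 => 'X
  | (d' .+1 as d1).+1 => 'X *+ 2 * chebT d1 - chebT d'
  end.

(* Write a_m for the Taylor coefficient T_n^(m)(eps)/m! at eps = +-1.  Since
   eps^2 = 1, Chebyshev's equation (1 - x^2) T'' - x T' + n^2 T = 0 expanded at
   eps gives (m + 1)(2m + 1) eps a_(m+1) = (n^2 - m^2) a_m, that is
   (2m + 2)! a_(m+1) = 2 eps (2m)! a_m (n^2 - m^2).  As n is odd, a_1 = n^2, so
   the hypothesis says p^w | n^2 - 1, and the recursion propagates this to
   p^w | (2m)! a_m for every m >= 2.  Legendre's formula gives
   (p - 1) v_p(N!) < N, hence v_p((2m)!) <= m - 2 because p >= 5, and so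
   p^(w+2) | p^m a_m. *)

From HB Require Import structures.
From mathcomp Require Import all_boot all_order all_algebra.
From mathcomp Require Import ring zify.
Import GRing.Theory.
Local Open Scope ring_scope.

Section TaylorCoefficients.

Variable R : comNzRingType.
Implicit Types (q s : {poly R}) (c : R).

Lemma nderivn_deriv q k : q^`()^`N(k) = q^`N(k.+1) *+ k.+1.
Proof.
apply/polyP => i; rewrite coefMn !coef_nderivn coef_deriv -!mulrnA addSn.
by congr (_ *+ _); rewrite (mul_bin_diag (k + i).+1) mulnC.
Qed.

Lemma horner_nderivn_XsubCM s c k :
  ((('X - c%:P) * s)^`N(k.+1)).[c] = (s^`N(k)).[c].
Proof.
have := nderivnMXaddC k s 0; rewrite polyC0 addr0 => nderivn_MX.
rewrite mulrBl nderivnB mulrC nderivn_MX mul_polyC nderivnZ.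
by rewrite !hornerE /=; ring.
Qed.

Lemma horner_nderivn_XsubC_deriv q c k :
  ((('X - c%:P) * q^`())^`N(k)).[c] = (q^`N(k)).[c] *+ k.
Proof.
case: k => [|k]; first by rewrite nderivn0 hornerM hornerXsubC subrr mul0r.
by rewrite horner_nderivn_XsubCM nderivn_deriv hornerMn.
Qed.

End TaylorCoefficients.

Section ChebyshevEquationAtSign.

Context {R : comNzRingType} {q : {poly R}} {c e : R}.
Hypothesis e2 : e ^+ 2 = 1.
Hypothesis ode : (1 - 'X^2) * q^`()^`() - 'X * q^`() + c *: q = 0.

Lemma horner_nderivn_ode_rec m :
  (q^`N(m)).[e] * (c - (m ^ 2)%:R)
    = e * (q^`N(m.+1)).[e] *+ (m.+1 * (2 * m).+1).
Proof.
(* As e ^+ 2 = 1, 1 - 'X^2 = - ('X - e%:P) * ('X - e%:P + (e *+ 2)%:P). *)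
have ode_at_e :
    - (('X - e%:P) * (('X - e%:P) * q^`()^`() + (e *+ 2) *: q^`()^`() + q^`()))
    - e *: q^`() + c *: q = 0.
  rewrite -ode -!mul_polyC; apply/eqP; rewrite -subr_eq0; apply/eqP.
  transitivity ((e%:P ^+ 2 - 1) * q^`()^`()); first by ring.
  by rewrite -rmorphXn e2 subrr mul0r.
have := congr1 (fun r => (r^`N(m)).[e]) ode_at_e.
rewrite /= linear0 horner0 nderivnD nderivnB nderivnN !nderivnZ !hornerE.
case: m => [|k].
  rewrite !nderivn0 hornerM hornerXsubC subrr mul0r oppr0 add0r nderivn1.
  by move=> /eqP; rewrite addrC subr_eq0 addr0 mulr1n mulrC => /eqP.
rewrite horner_nderivn_XsubCM !nderivnD nderivnZ !hornerE horner_nderivn_XsubC_deriv.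
rewrite !nderivn_deriv !hornerMn => ode_coef.
apply/eqP; rewrite -subr_eq0 -ode_coef; apply/eqP; ring.
Qed.

Lemma horner_nderivn_ode_fact_rec m :
  (q^`N(m.+1)).[e] * ((2 * m.+1)`!)%:R
    = e *+ 2 * (q^`N(m)).[e] * ((2 * m)`!)%:R * (c - (m ^ 2)%:R).
Proof.
transitivity (e *+ 2 * ((2 * m)`!)%:R * (e * (q^`N(m.+1)).[e] *+ (m.+1 * (2 * m).+1)));
  last by rewrite -horner_nderivn_ode_rec; ring.
rewrite (_ : (2 * m.+1 = (2 * m).+2)%N); last by lia.
by rewrite -[LHS]mul1r -{1}e2 !factS !natrM; ring.
Qed.

End ChebyshevEquationAtSign.

Lemma dvdz_horner_nderivn_fact (q : {poly int}) c e d m :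
  e ^+ 2 = 1 -> (1 - 'X^2) * q^`()^`() - 'X * q^`() + c *: q = 0 ->
  (d %| c - 1)%Z -> (1 < m)%N -> (d %| (q^`N(m)).[e] * ((2 * m)`!)%:R)%Z.
Proof.
move=> e2 ode d_dvd; elim: m => // m IHm m_gt0.
rewrite (horner_nderivn_ode_fact_rec e2 ode).
have [m_gt1 | m_le1] := ltnP 1 m.
  by apply: dvdz_mulr; rewrite -mulrA; apply: dvdz_mull; apply: IHm.
have -> : m = 1%N by lia.
by rewrite exp1n; apply: dvdz_mull.
Qed.

Lemma chebTSS d : chebT d.+2 = 'X *+ 2 * chebT d.+1 - chebT d.
Proof. by []. Qed.

Lemma deriv_chebTS d :
  (1 - 'X^2) * (chebT d.+1)^`() = (d.+1)%:R * (chebT d - 'X * chebT d.+1).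
Proof.
elim/ltn_ind: d => -[|[|d]] IH; try by rewrite /= !derivE; ring.
rewrite [chebT d.+3]chebTSS derivB derivM derivMn derivX.
transitivity ((1 - 'X^2) * chebT d.+2 *+ 2 + 'X *+ 2 * ((1 - 'X^2) * (chebT d.+2)^`())
              - (1 - 'X^2) * (chebT d.+1)^`()); first by ring.
by rewrite IH // IH // [chebT d.+2]chebTSS; ring.
Qed.

Lemma chebT_ode d :
  (1 - 'X^2) * (chebT d)^`()^`() - 'X * (chebT d)^`() + (d ^ 2)%:R *: chebT d = 0.
Proof.
rewrite scaler_nat.
elim/ltn_ind: d => -[|[|d]] IH; try by rewrite /= !derivE; ring.
transitivity ('X *+ 2 * ((1 - 'X^2) * (chebT d.+1)^`()^`() - 'X * (chebT d.+1)^`()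
                         + chebT d.+1 *+ d.+1 ^ 2)
   - ((1 - 'X^2) * (chebT d)^`()^`() - 'X * (chebT d)^`() + chebT d *+ d ^ 2)
   + 4%:R * ((1 - 'X^2) * (chebT d.+1)^`() - (d.+1)%:R * (chebT d - 'X * chebT d.+1))).
  have deriv1 : (1 : {poly int})^`() = 0 := derivC 1.
  by rewrite [chebT d.+2]chebTSS !(derivB, derivD, derivM, derivMn, derivX, deriv1); ring.
by rewrite IH // IH // deriv_chebTS subrr; ring.
Qed.

Lemma horner_chebT_sign (e : int) d : e ^+ 2 = 1 -> (chebT d).[e] = e ^+ d.
Proof.
move=> e2; elim/ltn_ind: d => -[|[|d]] IH; try by rewrite /= !hornerE.
rewrite chebTSS !hornerE IH // IH //.
have -> : e ^+ d.+2 = e ^+ d by rewrite -addn2 exprD e2 mulr1.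
transitivity (e ^+ 2 * e ^+ d *+ 2 - e ^+ d); first by rewrite exprS; ring.
by rewrite e2; ring.
Qed.

Lemma horner_deriv_chebT_sign (e : int) d :
  e ^+ 2 = 1 -> (chebT d)^`().[e] = e ^+ d.+1 *+ d ^ 2.
Proof.
move=> e2; have := horner_nderivn_ode_rec e2 (chebT_ode d) 0.
rewrite nderivn0 nderivn1 horner_chebT_sign //= subr0 mulr1n => rec.
by rewrite -[LHS]mul1r -e2 expr2 -mulrA -rec mulrA -exprS mulr_natr.
Qed.

Lemma sum_divn_expn_lt p N K : (1 < p)%N -> (0 < N)%N ->
  (p.-1 * \sum_(1 <= k < K.+1) N %/ p ^ k < N)%N.
Proof.
move=> p_gt1; elim: K N => [|K IHK] N N_gt0; first by rewrite big_geq ?muln0.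
rewrite big_nat_recl // expn1.
rewrite (eq_bigr (fun k => N %/ p %/ p ^ k)%N) => [|k _]; last by rewrite expnS divnMA.
have [-> | q_gt0] := posnP (N %/ p).
  by rewrite big1 => [|k _]; rewrite ?div0n ?muln0.
have := IHK _ q_gt0; have := leq_divM N p; nia.
Qed.

Lemma logn_fact_lt p N : prime p -> (0 < N)%N -> (p.-1 * logn p N`! < N)%N.
Proof. by move=> p_prime; rewrite logn_fact //; apply: sum_divn_expn_lt; apply: prime_gt1. Qed.

Lemma dvdn_mul_pfactor p w a b k : prime p -> (0 < b)%N ->
  (p ^ w %| a * b)%N -> (logn p b <= k)%N -> (p ^ w %| a * p ^ k)%N.
Proof.
move=> p_prime b_gt0 dvd_ab le_k.
have [b' p_coprime b_eq] := pfactor_coprime p_prime b_gt0.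
rewrite b_eq mulnCA Gauss_dvdr in dvd_ab; last exact: coprimeXl.
by apply: dvdn_trans dvd_ab _; rewrite dvdn_mul // dvdn_exp2l.
Qed.

Lemma dvdn_fact_double_expn p w a m : prime p -> (4 < p)%N -> (1 < m)%N ->
  (p ^ w %| a * (2 * m)`!)%N -> (p ^ (w + 2) %| a * p ^ m)%N.
Proof.
move=> p_prime p_gt4 m_gt1 dvd_fact.
have logn_le : (logn p (2 * m)`! <= m - 2)%N.
  have := @logn_fact_lt p (2 * m) p_prime (leq_trans (ltnW m_gt1) (leq_pmull _ _)).
  have : (4 * logn p (2 * m)`! <= p.-1 * logn p (2 * m)`!)%N by rewrite leq_mul2r; lia.
  lia.
have := dvdn_mul_pfactor _ _ _ _ _ p_prime (fact_gt0 _) dvd_fact logn_le.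
by rewrite -[in (p ^ m)%N](subnK m_gt1) !expnD mulnA dvdn_pmul2r ?expn_gt0 ?prime_gt0.
Qed.

Lemma odd_coprime_pred_sqr p n : odd p -> coprime n (p ^ 2 - 1) -> odd n.
Proof.
move=> p_odd n_coprime; rewrite -coprimen2; apply: coprime_dvdr n_coprime.
by rewrite dvdn2 oddB ?expn_gt0 ?odd_gt0 // oddX p_odd.
Qed.

Theorem lemma2 (p n : nat) (eps : int) (w m : nat) :
  prime p -> (3 < p)%N -> (1 < n)%N ->
  coprime n p -> coprime n (p ^ 2 - 1) ->
  (eps = 1 \/ eps = -1) -> (0 < w)%N ->
  ((chebT n)^`().[eps] = 1 %[mod (p ^ w)%:Z])%Z ->
  (2 <= m)%N ->
  (((chebT n)^`N(m)).[eps] * (p ^ m)%:Z = 0 %[mod (p ^ (w + 2))%:Z])%Z.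
Proof.
move=> p_prime p_gt3 _ _ n_coprime eps_sign _ deriv_eps m_ge2.
have e2 : eps ^+ 2 = 1 by case: eps_sign => ->; rewrite ?sqrrN expr1n.
have p_gt4 : (4 < p)%N by case: (ltngtP p 4) p_gt3 p_prime => // ->.
have n_odd : odd n.
  apply: odd_coprime_pred_sqr n_coprime.
  by case: (even_prime p_prime) p_gt3 => [->|].
have eps_n1 : eps ^+ n.+1 = 1.
  by case: eps_sign => ->; rewrite ?expr1n // -signr_odd /= n_odd.
rewrite horner_deriv_chebT_sign // eps_n1 in deriv_eps.
have p_w_dvd : ((p ^ w)%:Z %| (n ^ 2)%:R - 1)%Z by rewrite -eqz_mod_dvd; apply/eqP.
have := dvdz_horner_nderivn_fact (chebT n) _ eps _ m e2 (chebT_ode n) p_w_dvd m_ge2.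
rewrite dvdzE abszM natz /= => /(dvdn_fact_double_expn p w _ m p_prime p_gt4 m_ge2) dvd_expn.
by apply/eqP; rewrite eqz_mod_dvd subr0 dvdzE abszM.
Qed.
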